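(* Let $A:\Omega\to\mathbb C^{d\times d}$, $b,c:\Omega\to\mathbb C^d$, $V:\Omega\to\mathbb R_+$ and $p>1$, $q=p/(p-1)$. Suppose that $\Gamma_p^{A,b,c,V}(x,\xi)\ge0$ for almost all $x\in\Omega$ and all $\xi\in\mathbb C^d$. Then for almost all $x\in\Omega$ and all $\alpha,\beta\in\mathbb R^d$, $$\tfrac{4}{pq}\langle \Re A(x)\alpha,\alpha\rangle+\langle\Re A(x)\beta,\beta\rangle+2\langle(p^{-1}\Im A(x)+q^{-1}\Im A(x)^* )\alpha,\beta\rangle+\langle\Im(b(x)+c(x)),\beta\rangle+2\Big\langle\Re\Big(\tfrac{b(x)}p+\tfrac{c(x)}q\Big),\alpha\Big\rangle+V(x)\ge0,$$ i.e. the Cialdea–Maz'ya condition holds with $\theta=\nu=1$.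
   Context: $\Omega\subseteq\mathbb R^d$ open. On $\mathbb C^d$, $\langle \xi,\sigma\rangle=\sum_j\xi_j\overline{\sigma_j}$; in the displayed inequality the brackets are the real inner product on $\mathbb R^d$, and $\Re A,\Im A$ denote the entrywise real and imaginary parts of the matrix, $A^*$ its conjugate transpose, and $\Re,\Im$ of vectors are taken componentwise. $\mathcal{J}_p\xi=\frac p2(\xi+(1-\frac2p)\overline\xi)$ and $\Gamma_p^{A,b,c,V}(x,\xi)=\Re\langle A(x)\xi,\mathcal J_p\xi\rangle+\Re\langle b(x)+\mathcal J_pc(x),\xi\rangle+V(x)$. *)

From HB Require Import structures.
From mathcomp Require Import all_boot all_order all_algebra.
From mathcomp Require Import all_classical all_reals all_analysis.
From mathcomp Require Import complex.
Set Implicit Arguments. Unset Strict Implicit. Unset Printing Implicit Defensive.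
Import Order.TTheory GRing.Theory Num.Theory.
Local Open Scope ring_scope.

Section Defs.
Variable R : realType.
Variable d : nat.
Local Notation C := (R[i]).

Definition cdot (xi sigma : 'cV[C]_d) : C :=
  \sum_(j < d) xi j 0 * conjc (sigma j 0).

Definition rdot (u v : 'cV[R]_d) : R := \sum_(j < d) u j 0 * v j 0.

Definition Jp (p : R) (xi : 'cV[C]_d) : 'cV[C]_d :=
  \col_j (((p / 2)%:C)%C * (xi j 0 + ((1 - 2 / p)%:C)%C * conjc (xi j 0))).

Definition ReMx m n (M : 'M[C]_(m, n)) : 'M[R]_(m, n) := map_mx (@complex.Re R) M.
Definition ImMx m n (M : 'M[C]_(m, n)) : 'M[R]_(m, n) := map_mx (@complex.Im R) M.
Definition adjM (M : 'M[C]_d) : 'M[C]_d := map_mx conjc (M^T).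

Definition Gamma_p {T : Type} (p : R) (A : T -> 'M[C]_d) (b c : T -> 'cV[C]_d)
  (V : T -> R) (x : T) (xi : 'cV[C]_d) : R :=
  complex.Re (cdot (A x *m xi) (Jp p xi)) + complex.Re (cdot (b x + Jp p (c x)) xi) + V x.

End Defs.

(* The Cialdea-Maz'ya (CM) form is Gamma_p evaluated at the single vector
   xi = (2/p) alpha + i beta.  Since 1/p + 1/q = 1, one gets
   J_p xi = (2/q) alpha + i beta, so Re <A xi, J_p xi> is the quadratic part
   (4/(pq)) <Re A alpha, alpha> + <Re A beta, beta>
   + 2 <(Im A / p + Im A^* / q) alpha, beta>, and Re <b + J_p c, xi> is the
   linear part. *)

From HB Require Import structures.
From mathcomp Require Import all_boot all_order all_algebra.
From mathcomp Require Import all_classical all_reals all_analysis.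
From mathcomp Require Import complex ring.
Set Implicit Arguments. Unset Strict Implicit. Unset Printing Implicit Defensive.
Import Order.TTheory GRing.Theory Num.Theory.
Local Open Scope ring_scope.

Section CialdeaMazyaSubstitution.
Variables (R : realType) (d : nat).
Local Notation C := R[i].

Lemma Re_sum n (F : 'I_n -> C) :
  complex.Re (\sum_(i < n) F i) = \sum_(i < n) complex.Re (F i).
Proof. exact: (raddf_sum (@complex.Re R : Rcomplex R -> R)). Qed.

Lemma rdotDl (u v w : 'cV[R]_d) : rdot (u + v) w = rdot u w + rdot v w.
Proof. by rewrite /rdot -big_split; apply: eq_bigr => j _; rewrite mxE mulrDl. Qed.

Lemma rdotZl (s : R) (u w : 'cV[R]_d) : rdot (s *: u) w = s * rdot u w.
Proof. by rewrite /rdot mulr_sumr; apply: eq_bigr => j _; rewrite mxE mulrA. Qed.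

Lemma rdot_mulmx (X : 'M[R]_d) (u v : 'cV[R]_d) :
  rdot (X *m u) v = \sum_(j < d) \sum_(k < d) X j k * u k 0 * v j 0.
Proof. by apply: eq_bigr => j _; rewrite mxE mulr_suml. Qed.

Lemma rdot_ImMx_adjM (M : 'M[C]_d) (u v : 'cV[R]_d) :
  rdot (ImMx (adjM M) *m u) v = - rdot (ImMx M *m v) u.
Proof.
rewrite !rdot_mulmx exchange_big -sumrN; apply: eq_bigr => j _.
rewrite -sumrN; apply: eq_bigr => k _; rewrite !mxE /=.
by case: (M j k) => m1 m2 /=; ring.
Qed.

Lemma Re_cdot_mulmx (M : 'M[C]_d) (u v : 'cV[C]_d) :
  complex.Re (cdot (M *m u) v)
  = \sum_(j < d) \sum_(k < d) complex.Re (M j k * u k 0 * conjc (v j 0)).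
Proof. by rewrite Re_sum; apply: eq_bigr => j _; rewrite mxE mulr_suml Re_sum. Qed.

Variables (p q : R).
Hypotheses (p_neq0 : p != 0) (conj_pq : p^-1 + q^-1 = 1).

Definition cm_vector (alpha beta : 'cV[R]_d) : 'cV[C]_d :=
  \col_j ((2 / p * alpha j 0) +i* beta j 0)%C.

Lemma inv_conj_exponent : q^-1 = 1 - p^-1.
Proof. by rewrite -conj_pq addrC addKr. Qed.

Lemma Jp_cm_vector (alpha beta : 'cV[R]_d) :
  Jp p (cm_vector alpha beta) = \col_j ((2 / q * alpha j 0) +i* beta j 0)%C.
Proof.
apply/matrixP => j k; rewrite !mxE inv_conj_exponent.
by apply/eqP; rewrite eq_complex /=; apply/andP; split; apply/eqP; field.
Qed.

Lemma Re_cdot_principal_cm_vector (M : 'M[C]_d) (alpha beta : 'cV[R]_d) :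
  complex.Re (cdot (M *m cm_vector alpha beta) (Jp p (cm_vector alpha beta)))
  = 4 / (p * q) * rdot (ReMx M *m alpha) alpha + rdot (ReMx M *m beta) beta
    + 2 * rdot ((p^-1 *: ImMx M + q^-1 *: ImMx (adjM M)) *m alpha) beta.
Proof.
rewrite mulmxDl -!scalemxAl rdotDl !rdotZl rdot_ImMx_adjM !rdot_mulmx.
rewrite Re_cdot_mulmx mulrDr mulrN !mulrA -mulrN -sumrN !mulr_sumr -!big_split.
apply: eq_bigr => j _; rewrite -sumrN !mulr_sumr -!big_split.
apply: eq_bigr => k _; rewrite Jp_cm_vector !mxE /= invfM.
by case: (M j k) => m1 m2 /=; ring.
Qed.

Lemma Re_cdot_drift_cm_vector (b c : 'cV[C]_d) (alpha beta : 'cV[R]_d) :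
  complex.Re (cdot (b + Jp p c) (cm_vector alpha beta))
  = rdot (ImMx (b + c)) beta
    + 2 * rdot (ReMx ((p^-1)%:C%C *: b + (q^-1)%:C%C *: c)) alpha.
Proof.
rewrite Re_sum mulr_sumr -big_split; apply: eq_bigr => j _.
rewrite !mxE inv_conj_exponent.
by case: (b j 0) => b1 b2; case: (c j 0) => c1 c2 /=; field.
Qed.

Definition cm_form (M : 'M[C]_d) (b c : 'cV[C]_d) (v : R)
    (alpha beta : 'cV[R]_d) : R :=
  4 / (p * q) * rdot (ReMx M *m alpha) alpha
  + rdot (ReMx M *m beta) beta
  + 2 * rdot ((p^-1 *: ImMx M + q^-1 *: ImMx (adjM M)) *m alpha) beta
  + rdot (ImMx (b + c)) beta
  + 2 * rdot (ReMx ((p^-1)%:C%C *: b + (q^-1)%:C%C *: c)) alpha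
  + v.

Lemma Gamma_p_cm_vector (T : Type) (A : T -> 'M[C]_d) (b c : T -> 'cV[C]_d)
    (V : T -> R) (x : T) (alpha beta : 'cV[R]_d) :
  Gamma_p p A b c V x (cm_vector alpha beta)
  = cm_form (A x) (b x) (c x) (V x) alpha beta.
Proof.
by rewrite /Gamma_p Re_cdot_principal_cm_vector Re_cdot_drift_cm_vector !addrA.
Qed.

End CialdeaMazyaSubstitution.

Theorem proposition5p4 (R : realType) (d : nat)
  (dT : measure_display) (T : measurableType dT)
  (mu : {measure set T -> \bar R}) (Omega : set T)
  (A : T -> 'M[R[i]]_d) (b c : T -> 'cV[R[i]]_d) (V : T -> R) (p : R) :
  (forall x, Omega x -> 0 <= V x) ->
  1 < p ->
  let q := p / (p - 1) in
  {ae mu, forall x, Omega x ->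
     forall xi : 'cV[R[i]]_d, 0 <= Gamma_p p A b c V x xi} ->
  {ae mu, forall x, Omega x ->
     forall alpha beta : 'cV[R]_d,
       0 <= 4 / (p * q) * rdot (ReMx (A x) *m alpha) alpha
            + rdot (ReMx (A x) *m beta) beta
            + 2 * rdot ((p^-1 *: ImMx (A x) + q^-1 *: ImMx (adjM (A x))) *m alpha) beta
            + rdot (ImMx (b x + c x)) beta
            + 2 * rdot (ReMx (((p^-1)%:C)%C *: b x + ((q^-1)%:C)%C *: c x)) alpha
            + V x}.
Proof.
move=> _ p_gt1 q Gamma_ge0.
have p_neq0 : p != 0 by rewrite gt_eqF // (lt_trans ltr01).
have conj_pq : p^-1 + q^-1 = 1 by rewrite invf_div; field.
apply: filterS Gamma_ge0 => x Gamma_ge0 Omega_x alpha beta.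
have := Gamma_ge0 Omega_x (cm_vector p alpha beta).
by rewrite (Gamma_p_cm_vector p_neq0 conj_pq).
Qed.
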